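(* Let $d$ be a prime (possibly $d=2$), $n\in\mathbb{N}$, $A$ a multiplicative abelian group with an embedding $\zeta:\mathbb{Z}_d\to A$ such that every element $a\in\zeta(\mathbb{Z}_d)$ has a square root in $A$ (an element $b\in A$ with $b^2=a$), and let $W_1,W_2\in M_n(\mathbb{Z}_d)$ be such that $\Omega_i=W_i-W_i^T$ has full rank over $\mathbb{Z}_d$ for $i=1,2$. Then the polar commutator groups $\mathcal{G}_d^n(A,\zeta,W_1)$ and $\mathcal{G}_d^n(A,\zeta,W_2)$ are isomorphic.
   Context: An embedding $\zeta:\mathbb{Z}_d\to A$ is an injective group homomorphism. Let $F\subseteq A$ be a fixed set of representatives of $A/\zeta(\mathbb{Z}_d)$ with $1\in F$, and $r:A\to F$, $u:A\to\mathbb{Z}_d$ the maps with $a=r(a)\zeta(u(a))$. For $W\in M_n(\mathbb{Z}_d)$, $\mathcal{G}_d^n(A,\zeta,W)$ is the set $F\times\mathbb{Z}_d\times\mathbb{Z}_d^n$ with multiplication $(a,p,x)\cdot(b,q,y)=(r(ab),\,u(ab)+p+q+x^TWy,\,x+y)$. *)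

From HB Require Import structures.
From mathcomp Require Import all_boot all_order all_algebra.
Set Implicit Arguments. Unset Strict Implicit. Unset Printing Implicit Defensive.
Import Order.TTheory GRing.Theory Num.Theory.
Local Open Scope ring_scope.

(* The abelian group A is written additively (zmodType): the paper's
   product ab is a + b, its unit 1 is 0, and b^2 is b + b.
   Z_d (d prime) is 'F_d; Z_d^n is the type of column vectors 'cV['F_d]_n. *)

(* Elements of A x Z_d x Z_d^n; the polar commutator group G_d^n(A,zeta,W)
   is the subset of triples whose first component lies in F. *)
Definition Gtriple (A : zmodType) (d n : nat) : Type :=
  (A * 'F_d * 'cV['F_d]_n)%type.

Definition Gcarrier (A : zmodType) (d n : nat) (F : A -> Prop)
  (g : Gtriple A d n) : Prop := F g.1.1.

Definition Gmul (A : zmodType) (d n : nat) (r : A -> A) (u : A -> 'F_d)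
  (W : 'M['F_d]_n) (g h : Gtriple A d n) : Gtriple A d n :=
  let: (a, p, x) := g in
  let: (b, q, y) := h in
  (r (a + b), u (a + b) + p + q + (x^T *m W *m y) 0 0, x + y).

Definition Giso (A : zmodType) (d n : nat) (F : A -> Prop)
  (mul1 mul2 : Gtriple A d n -> Gtriple A d n -> Gtriple A d n) : Prop :=
  exists phi : Gtriple A d n -> Gtriple A d n,
    [/\ (forall g, Gcarrier F g -> Gcarrier F (phi g)),
        (forall g h, Gcarrier F g -> Gcarrier F h -> phi g = phi h -> g = h),
        (forall h, Gcarrier F h -> exists2 g, Gcarrier F g & phi g = h)
      & (forall g h, Gcarrier F g -> Gcarrier F h ->
           phi (mul1 g h) = mul2 (phi g) (phi h))].

(* Both Omega_i are invertible alternating forms, so by the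
   existence of symplectic bases they are congruent: Omega_1 = N Omega_2 N^T.
   Then S = N W_2 N^T - W_1 is symmetric, and (a, p, x) |-> (a, p, N^T x)
   fails to be a homomorphism exactly by the cocycle zeta(x^T S y).  This
   cocycle is a coboundary: S has a quadratic refinement g, with
   g(x + y) = g(x) + g(y) + zeta(x^T S y), namely zeta(x^T L x) for the strictly
   lower triangular part L of S plus, on the diagonal, zeta(s t^2 / 2) when d is
   odd, or a square root of zeta(s) at t = 1 when d = 2.  Twisting the map by g
   gives the isomorphism. *)

From HB Require Import structures.
From mathcomp Require Import all_boot all_order all_algebra.
From mathcomp Require Import zify ring.
Import GRing.Theory.
Local Open Scope ring_scope.
Set Implicit Arguments. Unset Strict Implicit. Unset Printing Implicit Defensive.

Definition alternating_mx (R : pzRingType) n (O : 'M[R]_n) :=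
  forall v : 'rV_n, v *m O *m v^T = 0.

Lemma alternating_mx_skew (R : pzRingType) n (O : 'M[R]_n) :
  alternating_mx O -> O^T = - O.
Proof.
move=> altO; have polar (v w : 'rV_n) : v *m O *m w^T = - (w *m O *m v^T).
  apply/eqP; rewrite -addr_eq0 addrC; apply/eqP.
  have := altO (v + w); rewrite linearD /= !mulmxDl !mulmxDr !altO.
  by rewrite add0r addr0 addrC.
apply/matrixP => i j; rewrite !mxE.
have entry (k l : 'I_n) :
    O k l = ((delta_mx 0 k : 'rV_n) *m O *m (delta_mx 0 l : 'rV_n)^T) 0 0.
  by rewrite -rowE trmx_delta -colE !mxE.
by rewrite (entry j i) (polar (delta_mx 0 j)) mxE (entry i j).
Qed.

Lemma trmx11 (V : nmodType) (M : 'M[V]_1) : M^T = M.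
Proof. by rewrite [M]mx11_scalar tr_scalar_mx. Qed.

Lemma skew_part_alternating (R : comPzRingType) n (W : 'M[R]_n) :
  alternating_mx (W - W^T).
Proof.
move=> v; rewrite mulmxBr mulmxBl.
suff -> : v *m W^T *m v^T = v *m W *m v^T by rewrite subrr.
by rewrite -[RHS]trmx11 !trmx_mul trmxK mulmxA.
Qed.

Section SymplecticBasis.
Variables (K : fieldType) (n : nat) (O : 'M[K]_n).
Hypotheses (O_alt : alternating_mx O) (O_unit : O \in unitmx).

Definition sform m p (X : 'M_(m, n)) (Y : 'M_(p, n)) := X *m O *m Y^T.

Lemma sformC m p (X : 'M_(m, n)) (Y : 'M_(p, n)) : sform Y X = - (sform X Y)^T.
Proof.
by rewrite /sform !trmx_mul trmxK (alternating_mx_skew O_alt) mulNmx mulmxN mulmxA opprK.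
Qed.

Lemma sform_mull m p q (X : 'M_(m, p)) (Y : 'M_(p, n)) (Z : 'M_(q, n)) :
  sform (X *m Y) Z = X *m sform Y Z.
Proof. by rewrite /sform !mulmxA. Qed.

Lemma sform_mulr m p q (X : 'M_(m, n)) (Y : 'M_(q, p)) (Z : 'M_(p, n)) :
  sform X (Y *m Z) = sform X Z *m Y^T.
Proof. by rewrite /sform trmx_mul !mulmxA. Qed.

Lemma sformDl m p (X1 X2 : 'M_(m, n)) (Y : 'M_(p, n)) :
  sform (X1 + X2) Y = sform X1 Y + sform X2 Y.
Proof. by rewrite /sform !mulmxDl. Qed.

Lemma sformBl m p (X1 X2 : 'M_(m, n)) (Y : 'M_(p, n)) :
  sform (X1 - X2) Y = sform X1 Y - sform X2 Y.
Proof. by rewrite /sform !mulmxBl. Qed.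

Lemma sform_col_mxr m p1 p2 (X : 'M_(m, n)) (Y1 : 'M_(p1, n)) (Y2 : 'M_(p2, n)) :
  sform X (col_mx Y1 Y2) = row_mx (sform X Y1) (sform X Y2).
Proof. by rewrite /sform tr_col_mx mul_mx_row. Qed.

Lemma sform_col_mx m1 m2 p1 p2 (X1 : 'M_(m1, n)) (X2 : 'M_(m2, n))
    (Y1 : 'M_(p1, n)) (Y2 : 'M_(p2, n)) :
  sform (col_mx X1 X2) (col_mx Y1 Y2) =
  block_mx (sform X1 Y1) (sform X1 Y2) (sform X2 Y1) (sform X2 Y2).
Proof. by rewrite block_mxEv -!sform_col_mxr /sform !mul_col_mx. Qed.

Definition symplectic_pair k (E F : 'M_(k, n)) :=
  [/\ sform E E = 0, sform F F = 0 & sform E F = 1%:M].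

Definition std_symplectic_mx k : 'M[K]_(k + k) := block_mx 0 1%:M (- 1%:M) 0.

Lemma std_symplectic_unit k : std_symplectic_mx k \in unitmx.
Proof.
suff : std_symplectic_mx k *m (- std_symplectic_mx k) = 1%:M by case/mulmx1_unit.
rewrite mulmxN mulmx_block !mulmx0 !mul0mx !mulmx1 !mul1mx !addr0 !add0r opp_block_mx.
by rewrite !opprK oppr0 -scalar_mx_block.
Qed.

Lemma symplectic_pair_gram k (E F : 'M_(k, n)) : symplectic_pair E F ->
  sform (col_mx E F) (col_mx E F) = std_symplectic_mx k.
Proof. by case=> EE FF EF; rewrite sform_col_mx [sform F E]sformC EE FF EF tr_scalar_mx. Qed.

Lemma sform_row_free m (X : 'M_(m, n)) : sform X X \in unitmx -> row_free X.
Proof.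
move=> XX_unit; rewrite /row_free eqn_leq rank_leq_row /=.
rewrite -[X in (X <= _)%N](mxrank_unit XX_unit).
exact: leq_trans (mxrankM_maxl _ _) (mxrankM_maxl _ _).
Qed.

Lemma symplectic_pair_rank k (E F : 'M_(k, n)) : symplectic_pair E F ->
  \rank (col_mx E F) = (k + k)%N.
Proof.
move=> EF; apply/eqP/sform_row_free.
by rewrite (symplectic_pair_gram EF) std_symplectic_unit.
Qed.

Lemma sform_orthogonal_exists m (X : 'M_(m, n)) : (m < n)%N ->
  exists2 e : 'rV_n, e != 0 & sform e X = 0.
Proof.
move=> lt_mn; have : kermx (O *m X^T) != 0.
  by rewrite -mxrank_eq0 mxrank_ker; have := rank_leq_col (O *m X^T); lia.
case/rowV0Pn=> e /sub_kermxP eOX nz_e.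
by exists e; rewrite // /sform -mulmxA.
Qed.

Lemma sform_nondegenerate (e : 'rV_n) : e != 0 -> exists w : 'rV_n, sform e w = 1%:M.
Proof.
move=> nz_e; have : e *m O != 0.
  by apply: contra nz_e => /eqP eO0; rewrite -(mulmxK O_unit e) eO0 mul0mx.
case/matrix0Pn=> i [j]; rewrite (ord1 i) => nz_eOj.
exists (((e *m O) 0 j)^-1 *: delta_mx 0 j).
rewrite /sform linearZ /= -scalemxAr trmx_delta -colE.
by rewrite [col _ _]mx11_scalar scale_scalar_mx [col _ _ _ _]mxE mulVf.
Qed.

Lemma symplectic_pair_extend k (E F : 'M_(k, n)) : (k + k < n)%N ->
  symplectic_pair E F -> exists E' F' : 'M_(1 + k, n), symplectic_pair E' F'.
Proof.
move=> lt_kn [EE FF EF]; have FE : sform F E = - 1%:M by rewrite sformC EF tr_scalar_mx.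
have [e nz_e] := sform_orthogonal_exists (col_mx E F) lt_kn.
rewrite sform_col_mxr -row_mx0 => /eq_row_mx[eE eF].
have [w ew] := sform_nondegenerate nz_e.
have orth_sym m p (X : 'M_(m, n)) (Y : 'M_(p, n)) : sform X Y = 0 -> sform Y X = 0.
  by move=> XY0; rewrite sformC XY0 trmx0 oppr0.
(* symplectic Gram-Schmidt: project [w] off the span of [E] and [F] *)
pose f := w - sform w F *m E + sform w E *m F.
have fE : sform f E = 0.
  by rewrite /f sformDl sformBl !sform_mull EE FE mulmx0 subr0 mulmxN mulmx1 subrr.
have fF : sform f F = 0.
  by rewrite /f sformDl sformBl !sform_mull EF FF mulmx0 addr0 mulmx1 subrr.
have ef : sform e f = 1%:M.
  rewrite sformC /f sformDl sformBl !sform_mull (orth_sym _ _ _ _ eE).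
  by rewrite (orth_sym _ _ _ _ eF) !mulmx0 subr0 addr0 -sformC ew.
exists (col_mx e E), (col_mx f F); split; rewrite sform_col_mx.
- by rewrite eE (orth_sym _ _ _ _ eE) EE (O_alt e : sform e e = 0) block_mx0.
- by rewrite fF (orth_sym _ _ _ _ fF) FF (O_alt f : sform f f = 0) block_mx0.
- by rewrite ef eF (orth_sym _ _ _ _ fE) EF -scalar_mx_block.
Qed.

Lemma symplectic_pair_exists k : (k + k <= n)%N ->
  exists E F : 'M_(k, n), symplectic_pair E F.
Proof.
elim: k => [|k IHk] le_kn; first by exists 0, 0; split; apply/matrixP => -[].
have [E [F EF]] := IHk ltac:(lia).
by apply: (symplectic_pair_extend _ EF); lia.
Qed.

Lemma symplectic_basis_exists :
  exists k (E F : 'M_(k, n)), symplectic_pair E F /\ n = (k + k)%N.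
Proof.
have n_half := odd_double_half n; rewrite -addnn in n_half.
have [E [F EF]] := symplectic_pair_exists (k := n./2) ltac:(lia).
exists n./2, E, F; split => //; case: (odd n) n_half => /= n_half; last by lia.
have [|E' [F' EF']] := symplectic_pair_extend _ EF; first by lia.
by have := rank_leq_col (col_mx E' F'); rewrite (symplectic_pair_rank EF'); lia.
Qed.

End SymplecticBasis.

Lemma alternating_mx_congr (K : fieldType) n (O1 O2 : 'M[K]_n) :
  alternating_mx O1 -> O1 \in unitmx -> alternating_mx O2 -> O2 \in unitmx ->
  exists2 N : 'M_n, N \in unitmx & O1 = N *m O2 *m N^T.
Proof.
move=> alt1 unit1 alt2 unit2.
have [k1 [E1 [F1 [EF1 n_k1]]]] := symplectic_basis_exists alt1 unit1.
have [k2 [E2 [F2 [EF2 n_k2]]]] := symplectic_basis_exists alt2 unit2.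
have k21 : k2 = k1 by lia.
subst k2; set P1 := col_mx E1 F1; set P2 := col_mx E2 F2.
have /row_fullP[Q QP1] : row_full P1.
  by rewrite /row_full (symplectic_pair_rank alt1 EF1) -n_k1.
have O1E : O1 = sform O2 (Q *m P2) (Q *m P2).
  rewrite sform_mull sform_mulr (symplectic_pair_gram alt2 EF2).
  rewrite -(symplectic_pair_gram alt1 EF1) -sform_mulr -sform_mull QP1.
  by rewrite /sform mul1mx trmx1 mulmx1.
exists (Q *m P2) => //.
by rewrite -row_free_unit; apply: (sform_row_free (O := O2)); rewrite -O1E.
Qed.

Lemma skew_congr_sym (R : comPzRingType) n (N W1 W2 : 'M[R]_n) :
  W1 - W1^T = N *m (W2 - W2^T) *m N^T ->
  (N *m W2 *m N^T - W1)^T = N *m W2 *m N^T - W1.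
Proof.
move=> eN; have W1T : W1^T = W1 - N *m (W2 - W2^T) *m N^T.
  by rewrite -eN opprB addrC subrK.
rewrite linearB /= W1T !trmx_mul trmxK mulmxA mulmxBr mulmxBl.
by rewrite opprB addrA subrKC.
Qed.

Definition quad_refinement (K : Type) (V A : zmodType) (zeta : K -> A)
    (b : V -> V -> K) (g : V -> A) :=
  forall x y, g (x + y) = g x + g y + zeta (b x y).

Section QuadRefinement.
Variables (K : comPzRingType) (A : zmodType) (zeta : K -> A).
Hypothesis zetaD : {morph zeta : p q / p + q}.

Lemma zeta0 : zeta 0 = 0.
Proof. by apply/(addrI (zeta 0)); rewrite -zetaD !addr0. Qed.

Lemma quad_refinementD (V : zmodType) b1 b2 (g1 g2 : V -> A) :
  quad_refinement zeta b1 g1 -> quad_refinement zeta b2 g2 ->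
  quad_refinement zeta (fun x y => b1 x y + b2 x y) (g1 \+ g2).
Proof. by move=> h1 h2 x y; rewrite /= h1 h2 zetaD addrACA (addrACA (g1 x)). Qed.

Lemma quad_refinement_sum (V : zmodType) (I : finType) b (g : I -> V -> A) :
  (forall i, quad_refinement zeta (b i) (g i)) ->
  quad_refinement zeta (fun x y => \sum_i b i x y) (fun x => \sum_i g i x).
Proof.
move=> hg x y; rewrite (big_morph zeta zetaD zeta0) -!big_split /=.
by apply: eq_bigr => i _; rewrite hg.
Qed.

Lemma form_quad_refinement n (L : 'M[K]_n) :
  quad_refinement zeta (fun x y => (x^T *m (L + L^T) *m y) 0 0)
    (fun x : 'cV_n => zeta ((x^T *m L *m x) 0 0)).
Proof.
move=> x y; rewrite -!zetaD; congr zeta.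
have yLx : y^T *m L *m x = x^T *m L^T *m y by rewrite -[LHS]trmx11 !trmx_mul trmxK mulmxA.
rewrite [(x + y)^T]linearD /= !mulmxDl !mulmxDr !mulmxDl yLx !mxE; ring.
Qed.

Lemma symmetric_mx_split n (S : 'M[K]_n) :
  S^T = S -> exists L, S = L + L^T + diag_mx (\row_i S i i).
Proof.
move=> symS; exists (\matrix_(i, j) if (j < i)%N then S i j else 0).
apply/matrixP => i j; rewrite !mxE.
have Sji : S j i = S i j by rewrite -[in RHS]symS mxE.
case: (ltngtP i j) => [lt_ij|lt_ji|/val_inj eq_ij].
- by rewrite (ltn_eqF lt_ij : (i == j) = false) Sji /=; ring.
- by rewrite (gtn_eqF lt_ji : (i == j) = false) /=; ring.
- by rewrite eq_ij eqxx /=; ring.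
Qed.

Lemma symmetric_quad_refinement (H : K -> K -> A) n (S : 'M[K]_n) :
  (forall s, quad_refinement zeta (fun a b => s * a * b) (H s)) -> S^T = S ->
  exists g : 'cV_n -> A, quad_refinement zeta (fun x y => (x^T *m S *m y) 0 0) g.
Proof.
move=> hH /symmetric_mx_split[L eS]; set D := diag_mx _ in eS.
have hdiag i : quad_refinement zeta (fun x y : 'cV_n => S i i * x i 0 * y i 0)
    (fun x => H (S i i) (x i 0)) by move=> x y; rewrite mxE hH.
have refine := quad_refinementD (form_quad_refinement L) (quad_refinement_sum hdiag).
set g := (_ \+ _) in refine; exists g => x y; rewrite refine; congr (_ + zeta _).
have -> : x^T *m S *m y = x^T *m (L + L^T) *m y + x^T *m D *m y.
  by rewrite [in LHS]eS mulmxDr mulmxDl.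
rewrite [RHS]mxE /D mul_mx_diag; congr (_ + _).
by rewrite mxE; apply: eq_bigr => i _; rewrite !mxE; ring.
Qed.

End QuadRefinement.

Lemma half_square_refinement (K : fieldType) (A : zmodType) (zeta : K -> A) :
  {morph zeta : p q / p + q} -> 2%:R != 0 :> K ->
  forall s, quad_refinement zeta (fun a b => s * a * b) (fun t => zeta (s * t * t / 2%:R)).
Proof. by move=> zetaD two_nz s a b; rewrite -!zetaD; congr zeta; field. Qed.

Lemma F2_refinement (A : zmodType) (zeta : 'F_2 -> A) :
  {morph zeta : p q / p + q} -> (forall p, exists b : A, b + b = zeta p) ->
  exists H : 'F_2 -> 'F_2 -> A,
    forall s, quad_refinement zeta (fun a b => s * a * b) (H s).
Proof.
move=> zetaD halvable; have half s : exists b : A, b + b == zeta s.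
  by have [b hb] := halvable s; exists b; apply/eqP.
exists (fun s t => if t == 0 then 0 else xchoose (half s)) => s a b.
have F2P (t : 'F_2) : t = 0 \/ t = 1 by case: t => -[|[|//]] ?; [left|right]; apply/val_inj.
have one_add_one : 1 + 1 = 0 :> 'F_2 by apply/val_inj.
have /eqP half_s := xchooseP (half s).
case: (F2P a) (F2P b) => -> [] ->;
  rewrite ?(add0r, addr0, one_add_one, mulr0, mulr1) ?eqxx ?oner_eq0 /=;
  rewrite ?(zeta0 zetaD) ?addr0 //.
by rewrite half_s -zetaD -[s]mulr1 -mulrDr one_add_one mulr0 (zeta0 zetaD).
Qed.

Lemma Fp_scalar_refinement (d : nat) (A : zmodType) (zeta : 'F_d -> A) : prime d ->
  {morph zeta : p q / p + q} -> (forall p, exists b : A, b + b = zeta p) ->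
  exists H : 'F_d -> 'F_d -> A,
    forall s, quad_refinement zeta (fun a b => s * a * b) (H s).
Proof.
move=> d_prime zetaD halvable; case: (eqVneq d 2) => [d2 | d_neq2].
  by subst d; exact: F2_refinement.
exists (fun s t => zeta (s * t * t / 2%:R)); apply: half_square_refinement => //.
by rewrite -(dvdn_pcharf (pchar_Fp d_prime)) dvdn_prime2.
Qed.

Section PolarGroup.
Variables (d n : nat) (A : zmodType) (zeta : 'F_d -> A).
Variables (F : A -> Prop) (r : A -> A) (u : A -> 'F_d).
Hypotheses (zetaD : {morph zeta : p q / p + q}) (zeta_inj : injective zeta).
Hypothesis F_uniq :
  forall f1 f2 p1 p2, F f1 -> F f2 -> f1 + zeta p1 = f2 + zeta p2 -> f1 = f2.
Hypothesis ruP : forall a, F (r a) /\ a = r a + zeta (u a).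

(* [Gval] and [Gmk] identify the carrier with A x Z_d^n, where [Gmul r u W]
   becomes (a, x)(b, y) = (a + b + zeta(x^T W y), x + y), see [GmulE]. *)
Definition Gval (g : Gtriple A d n) : A := g.1.1 + zeta g.1.2.

Definition Gmk (a : A) (x : 'cV['F_d]_n) : Gtriple A d n := (r a, u a, x).

Lemma Gmk_carrier a x : Gcarrier F (Gmk a x).
Proof. exact: (ruP a).1. Qed.

Lemma Gval_mk a x : Gval (Gmk a x) = a.
Proof. by rewrite /Gval /= -(ruP a).2. Qed.

Lemma Gmk_val g : Gcarrier F g -> Gmk (Gval g) g.2 = g.
Proof.
case: g => [[a p] x]; rewrite /Gcarrier /Gval /Gmk /= => Fa.
have [Fr ra] := ruP (a + zeta p).
have ar := F_uniq Fa Fr ra; rewrite -ar in ra *.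
by move/addrI/zeta_inj: ra => <-.
Qed.

Lemma GmulE W g h :
  Gmul r u W g h = Gmk (Gval g + Gval h + zeta ((g.2^T *m W *m h.2) 0 0)) (g.2 + h.2).
Proof.
case: g h => [[a p] x] [[b q] y]; rewrite -[LHS]Gmk_val; last exact: (ruP _).1.
by congr Gmk; rewrite /Gval /= !zetaD !addrA -(ruP (a + b)).2 (addrAC a).
Qed.

Lemma Giso_of_refinement (W1 W2 M : 'M['F_d]_n) (G : 'cV_n -> A) : M \in unitmx ->
  quad_refinement zeta (fun x y => (x^T *m (M^T *m W2 *m M - W1) *m y) 0 0) G ->
  Giso F (Gmul r u W1) (Gmul r u W2).
Proof.
move=> M_unit hG; exists (fun g => Gmk (Gval g + G g.2) (M *m g.2)); split.
- by move=> g _; exact: Gmk_carrier.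
- move=> g h Fg Fh e; have /= /(can_inj (mulKmx M_unit)) e2 := congr1 snd e.
  move: (congr1 Gval e); rewrite !Gval_mk e2 => /addIr e1.
  by rewrite -(Gmk_val Fg) -(Gmk_val Fh) e1 e2.
- move=> h Fh; pose x := invmx M *m h.2.
  exists (Gmk (Gval h - G x) x); first exact: Gmk_carrier.
  by rewrite Gval_mk subrK /= mulKVmx // Gmk_val.
- move=> g h _ _; rewrite !GmulE !Gval_mk mulmxDr; congr Gmk.
  set x := g.2; set y := h.2.
  have cE : ((M *m x)^T *m W2 *m (M *m y)) 0 0 =
      (x^T *m W1 *m y) 0 0 + (x^T *m (M^T *m W2 *m M - W1) *m y) 0 0.
    rewrite mulmxBr mulmxBl trmx_mul !mulmxA [X in _ + X]mxE [X in _ + (_ + X)]mxE.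
    by rewrite addrCA subrr addr0.
  by rewrite hG cE zetaD addrACA (addrACA (Gval g)).
Qed.

End PolarGroup.

Theorem proposition23 (d n : nat) (A : zmodType) (zeta : 'F_d -> A)
  (F : A -> Prop) (r : A -> A) (u : A -> 'F_d) (W1 W2 : 'M['F_d]_n) :
  prime d ->
  (* zeta is an embedding (injective homomorphism) *)
  (forall p q, zeta (p + q) = zeta p + zeta q) ->
  injective zeta ->
  (* every element of zeta(Z_d) has a square root in A *)
  (forall p, exists b : A, b + b = zeta p) ->
  (* F is a set of representatives of A / zeta(Z_d) containing the unit *)
  F 0 ->
  (forall a, exists f, F f /\ exists p, a = f + zeta p) ->
  (forall f1 f2 p1 p2, F f1 -> F f2 -> f1 + zeta p1 = f2 + zeta p2 -> f1 = f2) ->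
  (* r and u: a = r(a) zeta(u(a)) with r(a) in F *)
  (forall a, F (r a) /\ a = r a + zeta (u a)) ->
  (* Omega_i = W_i - W_i^T has full rank *)
  \rank (W1 - W1^T) = n ->
  \rank (W2 - W2^T) = n ->
  Giso F (Gmul r u W1) (Gmul r u W2).
Proof.
move=> d_prime zetaD zeta_inj halvable _ _ F_uniq ruP rank1 rank2.
have skew_unit (W : 'M['F_d]_n) : \rank (W - W^T) = n -> W - W^T \in unitmx.
  by move=> rankW; rewrite -row_free_unit /row_free rankW.
have [N N_unit eN] := alternating_mx_congr (skew_part_alternating W1)
  (skew_unit _ rank1) (skew_part_alternating W2) (skew_unit _ rank2).
have [H hH] := Fp_scalar_refinement d_prime zetaD halvable.
have [G hG] := symmetric_quad_refinement zetaD hH (skew_congr_sym eN).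
apply: (Giso_of_refinement zetaD zeta_inj F_uniq ruP (M := N^T)).
  by rewrite unitmx_tr.
by rewrite trmxK; exact: hG.
Qed.
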